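(* Let $k\ge0$ be an integer and $t\ge1$ an odd integer. Let $\varphi$ be the endomorphism of $E$ given on generators by $\varphi(e_n)=e_n$ for $1\le n\le k$, $\varphi(e_n)=-e_n$ for $k+1\le n\le k+t$, and $\varphi(e_n)=-e_n+2e_1\cdots e_ke_{k+1}\cdots e_{k+t}e_n$ for $n>k+t$ (this $\varphi$ is an automorphism with $\varphi^2=\mathrm{id}$). Then $E_\varphi$ and $E_k$ are isomorphic as $\mathbb{Z}_2$-graded algebras.
   Context: $F$ is a field of characteristic zero, $L$ an infinite-dimensional $F$-vector space with basis $e_1,e_2,\ldots$, $E$ its Grassmann algebra. $E_\varphi$ is the $\mathbb{Z}_2$-grading on $E$ by the eigenspaces of $\varphi$ for $1$ (degree 0) and $-1$ (degree 1). $E_k$ is the $\mathbb{Z}_2$-grading in which $e_1,\ldots,e_k$ have degree $0$ and all other $e_i$ have degree $1$. *)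

From HB Require Import structures.
From mathcomp Require Import all_boot all_order all_algebra.
Set Implicit Arguments. Unset Strict Implicit. Unset Printing Implicit Defensive.
Import Order.TTheory GRing.Theory.
Local Open Scope ring_scope.

(* Generators are indexed from 0: the paper's e_n (n >= 1) is  g (n - 1). *)

Section Grassmann.
Variables (F : fieldType) (A : algType F) (g : nat -> A).

Definition gmono (s : seq nat) : A := \prod_(i <- s) g i.

Definition in_mono_span (P : seq nat -> bool) (x : A) : Prop :=
  exists (ms : seq (seq nat)) (cs : seq F),
    all (sorted ltn) ms /\ all P ms /\
    x = \sum_(i < size ms) cs`_i *: gmono (nth [::] ms i).

Definition is_grassmann : Prop :=
  [/\ forall i j, g i * g j = - (g j * g i),
      forall x, in_mono_span predT x &
      forall (ms : seq (seq nat)) (cs : seq F),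
        uniq ms -> all (sorted ltn) ms -> size cs = size ms ->
        \sum_(i < size ms) cs`_i *: gmono (nth [::] ms i) = 0 -> all (eq_op^~ 0) cs].

Definition alg_endo (f : A -> A) : Prop :=
  [/\ forall (a : F) (x y : A), f (a *: x + y) = a *: f x + f y,
      forall x y, f (x * y) = f x * f y & f 1 = 1].

(* grading E_k: g 0, ..., g (k-1) (i.e. e_1..e_k) have degree 0, others degree 1;
   homogeneous of degree b = span of monomials with parity of the number of
   factors of index >= k equal to b *)
Definition Ek_homog (k : nat) (b : bool) (x : A) : Prop :=
  in_mono_span (fun s => odd (count (fun i => k <= i)%N s) == b) x.

Definition Ephi_homog (phi : A -> A) (b : bool) (x : A) : Prop :=
  phi x = (if b then - x else x).

Definition graded_iso (gr1 gr2 : bool -> A -> Prop) (psi : A -> A) : Prop :=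
  [/\ alg_endo psi, bijective psi &
      forall b x, gr1 b x -> gr2 b (psi x)].

End Grassmann.

From HB Require Import structures.
From mathcomp Require Import all_boot all_order all_algebra.
Set Implicit Arguments. Unset Strict Implicit. Unset Printing Implicit Defensive.
Import GRing.Theory.
Local Open Scope ring_scope.

(* Put w = e_1 ... e_(k+t).  As the ordered monomials form a basis of E, every
   anticommuting square-zero family in E is the image of the generators under a unique
   algebra endomorphism.  Since w^2 = 0 and e_n w = (-1)^(k+t) w e_n, the families
   e_n |-> (1 + a w) e_n qualify; call psi_a the resulting endomorphisms.  Each psi_a
   fixes w, so psi_1 and psi_(-1) are mutually inverse.  Let phi_k fix e_1, ..., e_k and
   negate the other generators: its eigenspaces are the homogeneous components of E_k,
   and phi_k w = - w because t is odd.  On generators phi_k psi_1 = psi_1 phi, hence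
   psi_1 maps the eigenspaces of phi onto those of phi_k. *)

Fixpoint wedge_insert (i : nat) (u : seq nat) : int * seq nat :=
  if u is j :: u' then
    if (i < j)%N then (1, i :: u)
    else if i == j then (0, [::])
    else let p := wedge_insert i u' in (- p.1, j :: p.2)
  else (1, [:: i]).

Lemma mem_wedge_insert i u : {subset (wedge_insert i u).2 <= i :: u}.
Proof.
elim: u => [|j u IH] //= x; case: ltnP => // _; case: eqP => // _.
rewrite !inE => /predU1P [-> | /IH]; first by rewrite eqxx orbT.
by rewrite inE => /predU1P [-> | ->]; rewrite ?eqxx ?orbT.
Qed.

Lemma sorted_wedge_insert i u : sorted ltn u -> sorted ltn (wedge_insert i u).2.
Proof.
elim: u => [|j u IH] //=; case: ltngtP => [i_lt_j | j_lt_i | _] u_sorted //=.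
  by rewrite i_lt_j.
rewrite (path_sortedE ltn_trans) IH ?(path_sorted u_sorted) // andbT.
move: u_sorted; rewrite (path_sortedE ltn_trans) => /andP [j_lt_u _].
by apply/allP => x /mem_wedge_insert /predU1P [-> // | /(allP j_lt_u)].
Qed.

Lemma prod_wedge_insert (R : pzRingType) (y : nat -> R) :
    (forall i j, y i * y j = - (y j * y i)) -> (forall i, y i * y i = 0) ->
  forall i u, y i * \prod_(j <- u) y j
              = (\prod_(j <- (wedge_insert i u).2) y j) *~ (wedge_insert i u).1.
Proof.
move=> y_anticomm y_sq0 i; elim=> [|j u IH] /=; first by rewrite big_nil big_seq1 mulr1.
case: ltnP => _; first by rewrite !big_cons.
case: eqP => [-> | _] /=; first by rewrite big_cons mulrA y_sq0 mul0r mulr0z.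
by rewrite !big_cons mulrA y_anticomm mulNr -mulrA IH mulrNz mulrzAr.
Qed.

Section LinearCombination.
Variables (R : pzRingType) (M : lmodType R) (T : eqType).
Implicit Types (X : T -> M) (r : seq (R * T)).

Definition lincomb X r : M := \sum_(p <- r) p.1 *: X p.2.

Definition scale_terms (a : R) r := [seq (a * p.1, p.2) | p <- r].

Lemma lincomb_cat X r1 r2 : lincomb X (r1 ++ r2) = lincomb X r1 + lincomb X r2.
Proof. exact: big_cat. Qed.

Lemma lincomb_scale X a r : lincomb X (scale_terms a r) = a *: lincomb X r.
Proof.
by rewrite /lincomb big_map scaler_sumr; apply: eq_bigr => p _; rewrite scalerA.
Qed.

Lemma lincomb_collect X r :
  lincomb X r = \sum_(s <- undup (map snd r)) (\sum_(p <- r | p.2 == s) p.1) *: X s.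
Proof.
rewrite /lincomb; under [RHS]eq_bigr => s _ do rewrite scaler_suml big_mkcond /=.
rewrite exchange_big /= big_seq [RHS]big_seq; apply: eq_bigr => p pr.
rewrite (bigD1_seq p.2) ?undup_uniq ?mem_undup ?map_f //= eqxx big1 ?addr0 //.
by move=> s; rewrite eq_sym => /negbTE ->.
Qed.

End LinearCombination.

Lemma linear_lincomb (R : pzRingType) (M N : lmodType R) (T : eqType) (f : M -> N)
    (X : T -> M) r :
  linear f -> f (lincomb X r) = lincomb (f \o X) r.
Proof.
move=> f_lin; elim: r => [|p r IH]; rewrite /lincomb ?big_nil ?big_cons.
  by rewrite -(subrr (0 : M)) (zmod_morphism_linear f_lin) subrr.
by rewrite f_lin IH.
Qed.

Lemma lincomb_mulr (R : pzRingType) (A : lalgType R) (T : eqType) (X : T -> A) r z :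
  lincomb X r * z = lincomb (fun t => X t * z) r.
Proof. by rewrite /lincomb mulr_suml; apply: eq_bigr => p _; rewrite scalerAl. Qed.

Section SortedKeys.
Variable R : pzRingType.
Implicit Types r : seq (R * seq nat).

Definition sorted_keys r := all (sorted ltn) (map snd r).

Lemma sorted_keys_cat r1 r2 : sorted_keys (r1 ++ r2) = sorted_keys r1 && sorted_keys r2.
Proof. by rewrite /sorted_keys map_cat all_cat. Qed.

Lemma sorted_keys_scale a r : sorted_keys (scale_terms a r) = sorted_keys r.
Proof. by rewrite /sorted_keys -map_comp. Qed.

Definition wedge_term (i : nat) (p : R * seq nat) :=
  (p.1 *~ (wedge_insert i p.2).1, (wedge_insert i p.2).2).

Lemma sorted_keys_wedge i r : sorted_keys r -> sorted_keys (map (wedge_term i) r).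
Proof.
move=> r_sorted; rewrite /sorted_keys -map_comp; apply/allP => s /mapP [p pr ->] /=.
exact/sorted_wedge_insert/(allP r_sorted)/map_f.
Qed.

End SortedKeys.

Section AlgebraMorphism.
Variables (R : pzRingType) (A B : algType R) (f : A -> B).

Definition alg_morph : Prop := [/\ linear f, {morph f : x y / x * y} & f 1 = 1].

Hypothesis f_morph : alg_morph.

Lemma alg_morph_linear : linear f. Proof. by case: f_morph. Qed.

Lemma alg_morphB : {morph f : x y / x - y}.
Proof. exact: zmod_morphism_linear alg_morph_linear. Qed.

Lemma alg_morph0 : f 0 = 0.
Proof. by rewrite -(subrr (0 : A)) alg_morphB subrr. Qed.

Lemma alg_morphN : {morph f : x / - x}.
Proof. by move=> x; rewrite -sub0r alg_morphB alg_morph0 sub0r. Qed.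

Lemma alg_morphD : {morph f : x y / x + y}.
Proof. by move=> x y; rewrite -{1}[y]opprK alg_morphB alg_morphN opprK. Qed.

Lemma alg_morphZ a : {morph f : x / a *: x}.
Proof. by move=> x; rewrite -[a *: x]addr0 alg_morph_linear alg_morph0 addr0. Qed.

Lemma alg_morphM : {morph f : x y / x * y}. Proof. by case: f_morph. Qed.

Lemma alg_morph1 : f 1 = 1. Proof. by case: f_morph. Qed.

Lemma alg_morph_prod (I : Type) (r : seq I) (h : I -> A) :
  f (\prod_(i <- r) h i) = \prod_(i <- r) f (h i).
Proof. exact: (big_morph f alg_morphM alg_morph1). Qed.

End AlgebraMorphism.

Lemma alg_morph_comp (R : pzRingType) (A B C : algType R) (f : B -> C) (h : A -> B) :
  alg_morph f -> alg_morph h -> alg_morph (f \o h).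
Proof.
move=> [f_lin f_mul f1] [h_lin h_mul h1]; split=> [a x y|x y|] /=.
- by rewrite h_lin f_lin.
- by rewrite h_mul f_mul.
- by rewrite h1 f1.
Qed.

Lemma alg_morph_id (R : pzRingType) (A : algType R) : alg_morph (@id A).
Proof. by []. Qed.

Lemma Ephi_homog_intertwine (F : fieldType) (A : algType F) (f h psi : A -> A) b x :
  alg_morph psi -> (forall x, f (psi x) = psi (h x)) ->
  Ephi_homog h b x -> Ephi_homog f b (psi x).
Proof.
by move=> psi_morph psi_hf; rewrite /Ephi_homog psi_hf => ->; case: b; rewrite ?alg_morphN.
Qed.

Section AnticommutingFamily.
Variables (F : fieldType) (A : algType F) (y : nat -> A).
Hypothesis y_anticomm : forall i j, y i * y j = - (y j * y i).
Hypothesis y_sq0 : forall i, y i * y i = 0.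

Local Notation ym := (gmono y).

Lemma mul_lincomb_gmono i r : y i * lincomb ym r = lincomb ym (map (wedge_term i) r).
Proof.
rewrite /lincomb mulr_sumr big_map; apply: eq_bigr => p _.
by rewrite -scalerAr /gmono (prod_wedge_insert y_anticomm y_sq0) -scalerMzr scalerMzl.
Qed.

Lemma mul_gmono n s : y n * ym s = (-1) ^+ size s *: (ym s * y n).
Proof.
elim: s => [|i s IH]; first by rewrite /gmono big_nil mulr1 mul1r scale1r.
rewrite /gmono in IH *; rewrite !big_cons mulrA y_anticomm mulNr -[y i * y n * _]mulrA.
by rewrite IH -scalerAr exprS mulN1r scaleNr !mulrA.
Qed.

Lemma mul_gmono_mem0 j s : j \in s -> y j * ym s = 0.
Proof.
elim: s => [|i s IH] //; rewrite inE /gmono big_cons => /predU1P [-> | j_s].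
  by rewrite mulrA y_sq0 mul0r.
by rewrite mulrA y_anticomm mulNr -mulrA IH // mulr0 oppr0.
Qed.

Lemma gmono_mul_mem0 j s : j \in s -> ym s * y j = 0.
Proof.
move=> j_s; have sign_neq0 : (-1) ^+ size s != 0 :> F by rewrite signr_eq0.
by apply: (scalerI sign_neq0); rewrite scaler0 -mul_gmono mul_gmono_mem0.
Qed.

Section Twist.
Variable m : nat.

Local Notation w := (\prod_(j < m) y j).

Lemma prefix_gmono : w = ym (iota 0 m).
Proof. by rewrite /gmono -(big_mkord xpredT) /index_iota subn0. Qed.

Lemma prefix_mul0 j : (j < m)%N -> w * y j = 0.
Proof. by move=> j_lt_m; rewrite prefix_gmono gmono_mul_mem0 // mem_iota. Qed.

Lemma mul_prefix n : y n * w = (-1) ^+ m *: (w * y n).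
Proof. by rewrite prefix_gmono mul_gmono size_iota. Qed.

Hypothesis m_gt0 : (0 < m)%N.

Lemma prefix_sq0 : w * w = 0.
Proof.
have w_split : w = y 0 * ym (iota 1 m.-1).
  by rewrite prefix_gmono -{1}(prednK m_gt0) /gmono big_cons.
by rewrite {2}w_split mulrA prefix_mul0 ?mul0r.
Qed.

Lemma unipotent_mul a b : (1 + a *: w) * (1 + b *: w) = 1 + (a + b) *: w.
Proof.
rewrite mulrDl mul1r mulrDr mulr1 -scalerAl -scalerAr prefix_sq0 !scaler0 addr0.
by rewrite scalerDl addrA addrAC.
Qed.

Definition twist (a : F) n := (1 + a *: w) * y n.

Lemma mul_unipotent a n : y n * (1 + a *: w) = (1 + (a * (-1) ^+ m) *: w) * y n.
Proof. by rewrite mulrDr mulr1 -scalerAr mul_prefix scalerA mulrDl mul1r -scalerAl. Qed.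

Lemma twist_mul a i j :
  twist a i * twist a j = (1 + a *: w) * (1 + (a * (-1) ^+ m) *: w) * (y i * y j).
Proof. by rewrite /twist -!mulrA; congr (_ * _); rewrite mulrA mul_unipotent -!mulrA. Qed.

Lemma twist_anticomm a i j : twist a i * twist a j = - (twist a j * twist a i).
Proof. by rewrite !twist_mul y_anticomm mulrN. Qed.

Lemma twist_sq0 a i : twist a i * twist a i = 0.
Proof. by rewrite twist_mul y_sq0 mulr0. Qed.

Lemma twist_prefix a n : (n < m)%N -> twist a n = y n.
Proof.
by move=> n_lt_m; rewrite /twist mulrDl mul1r -scalerAl prefix_mul0 // scaler0 addr0.
Qed.

End Twist.

Definition sign_gen (k n : nat) := (-1) ^+ (k <= n)%N *: y n.

Lemma sign_gen_anticomm k i j :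
  sign_gen k i * sign_gen k j = - (sign_gen k j * sign_gen k i).
Proof. by rewrite /sign_gen -!scalerAl -!scalerAr y_anticomm !scalerA mulrC scalerN. Qed.

Lemma sign_gen_sq0 k i : sign_gen k i * sign_gen k i = 0.
Proof. by rewrite /sign_gen -scalerAl -scalerAr y_sq0 !scaler0. Qed.

End AnticommutingFamily.

Lemma add1_signrM (R : pzRingType) (b : bool) n :
  1 + (-1) ^+ b * (-1) ^+ n = (odd n == b)%:R *+ 2 :> R.
Proof.
rewrite -[(-1) ^+ n]signr_odd; case: b; case: (odd n);
  by rewrite /= ?expr1 ?expr0 ?mulrNN ?mul1r ?mulr1 ?subrr ?mul0rn.
Qed.

Section Grassmann.
Variables (F : fieldType) (A : algType F) (g : nat -> A).

Local Notation gm := (gmono g).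

Lemma lincomb_nth (M : lmodType F) (X : seq nat -> M) (r : seq (F * seq nat)) :
  \sum_(i < size (map snd r)) (map fst r)`_i *: X (nth [::] (map snd r) i) = lincomb X r.
Proof.
rewrite /lincomb (big_nth (0, [::])) big_mkord size_map; apply: eq_bigr => i _.
by rewrite (nth_map (0, [::])) // (nth_map (0, [::])).
Qed.

Lemma in_mono_spanP (P : pred (seq nat)) x :
  in_mono_span g P x <->
  exists2 r, sorted_keys r && all P (map snd r) & x = lincomb gm r.
Proof.
split=> [[ms [cs [ms_sorted [ms_P ->]]]] | [r /andP [r_sorted r_P] ->]].
  pose r := [seq (cs`_i, nth [::] ms i) | i <- iota 0 (size ms)].
  have keys_r : map snd r = ms by rewrite -map_comp; exact: mkseq_nth.
  exists r; first by rewrite /sorted_keys keys_r ms_sorted ms_P.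
  by rewrite /lincomb big_map -(subn0 (size ms)) -/(index_iota 0 _) big_mkord subn0.
by exists (map snd r), (map fst r); rewrite lincomb_nth.
Qed.

Hypothesis grassmann_g : is_grassmann g.
Hypothesis two_neq0 : 2%:R != 0 :> F.

Lemma g_anticomm i j : g i * g j = - (g j * g i).
Proof. by case: grassmann_g. Qed.

Lemma g_sq0 i : g i * g i = 0.
Proof.
apply: (scalerI two_neq0); rewrite scaler0 scaler_nat mulr2n {1}g_anticomm.
exact: addNr.
Qed.

Lemma lincomb_spanning x : exists r, sorted_keys r && (x == lincomb gm r).
Proof.
case: grassmann_g => _ /(_ x) /in_mono_spanP [r /andP [r_sorted _] ->] _.
by exists r; rewrite r_sorted eqxx.
Qed.

Lemma lincomb_free r : uniq (map snd r) -> sorted_keys r ->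
  lincomb gm r = 0 -> all (eq_op^~ 0) (map fst r).
Proof.
move=> r_uniq r_sorted r0; case: grassmann_g => _ _ /(_ (map snd r) (map fst r)).
by apply=> //; [rewrite !size_map | rewrite lincomb_nth].
Qed.

Lemma lincomb_transfer0 (M : lmodType F) (X : seq nat -> M) r :
  sorted_keys r -> lincomb gm r = 0 -> lincomb X r = 0.
Proof.
move=> r_sorted r0; pose keys := undup (map snd r).
pose coef s := \sum_(p <- r | p.2 == s) p.1.
pose r' := [seq (coef s, s) | s <- keys].
have keys_r' : map snd r' = keys by rewrite -map_comp map_id.
have coef0 : all (eq_op^~ 0) (map coef keys).
  have -> : map coef keys = map fst r' by rewrite -map_comp.
  apply: lincomb_free.
  - by rewrite keys_r' undup_uniq.
  - by rewrite /sorted_keys keys_r'; apply/allP => s; rewrite mem_undup => /(allP r_sorted).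
  - by rewrite /lincomb big_map -[RHS]r0 lincomb_collect.
rewrite lincomb_collect big_seq big1 // => s s_key.
by have /allP /(_ _ (map_f coef s_key)) /eqP := coef0; rewrite /coef => ->; rewrite scale0r.
Qed.

Lemma lincomb_transfer (M : lmodType F) (X : seq nat -> M) r1 r2 :
  sorted_keys r1 -> sorted_keys r2 -> lincomb gm r1 = lincomb gm r2 ->
  lincomb X r1 = lincomb X r2.
Proof.
move=> r1_sorted r2_sorted r12; apply/eqP; rewrite -subr_eq0 -scaleN1r.
rewrite -lincomb_scale -lincomb_cat; apply/eqP/lincomb_transfer0.
  by rewrite sorted_keys_cat sorted_keys_scale r1_sorted.
by rewrite lincomb_cat lincomb_scale r12 scaleN1r subrr.
Qed.

Section Lift.
Variables (B : algType F) (y : nat -> B).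

Local Notation ym := (gmono y).

(* Well defined thanks to [lincomb_transfer]: the value does not depend on the
   expansion picked by [xchoose]. *)
Definition grassmann_lift (x : A) : B := lincomb ym (xchoose (lincomb_spanning x)).

Lemma grassmann_lift_lincomb r :
  sorted_keys r -> grassmann_lift (lincomb gm r) = lincomb ym r.
Proof.
have /andP [r'_sorted /eqP r'E] := xchooseP (lincomb_spanning (lincomb gm r)).
by move=> r_sorted; apply: lincomb_transfer r'_sorted r_sorted (esym r'E).
Qed.

Lemma grassmann_lift_linear : linear grassmann_lift.
Proof.
move=> a x z.
have /andP [rx_sorted /eqP {1}->] := xchooseP (lincomb_spanning x).
have /andP [rz_sorted /eqP {1}->] := xchooseP (lincomb_spanning z).
rewrite -lincomb_scale -lincomb_cat grassmann_lift_lincomb ?lincomb_cat ?lincomb_scale //.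
by rewrite sorted_keys_cat sorted_keys_scale rx_sorted.
Qed.

Lemma grassmann_lift_g n : grassmann_lift (g n) = y n.
Proof.
have -> : g n = lincomb gm [:: (1, [:: n])].
  by rewrite /lincomb big_seq1 scale1r /gmono big_seq1.
by rewrite grassmann_lift_lincomb // /lincomb big_seq1 scale1r /gmono big_seq1.
Qed.

Hypothesis y_anticomm : forall i j, y i * y j = - (y j * y i).
Hypothesis y_sq0 : forall i, y i * y i = 0.

Lemma grassmann_lift_g_mull i x : grassmann_lift (g i * x) = y i * grassmann_lift x.
Proof.
have /andP [r_sorted /eqP {1}->] := xchooseP (lincomb_spanning x).
rewrite (mul_lincomb_gmono g_anticomm g_sq0) grassmann_lift_lincomb.
  by rewrite -mul_lincomb_gmono.
exact: sorted_keys_wedge.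
Qed.

Lemma grassmann_lift_gmono_mull s x :
  grassmann_lift (gm s * x) = ym s * grassmann_lift x.
Proof.
elim: s x => [|i s IH] x; first by rewrite /gmono !big_nil !mul1r.
by rewrite /gmono !big_cons -!mulrA grassmann_lift_g_mull IH.
Qed.

Lemma grassmann_lift_morph : alg_morph grassmann_lift.
Proof.
split; first exact: grassmann_lift_linear.
- move=> x z; have /andP [_ /eqP {1}->] := xchooseP (lincomb_spanning x).
  rewrite lincomb_mulr (linear_lincomb _ _ grassmann_lift_linear) lincomb_mulr.
  by apply: eq_bigr => p _ /=; rewrite grassmann_lift_gmono_mull.
- have -> : (1 : A) = lincomb gm [:: (1, [::])].
    by rewrite /lincomb big_seq1 scale1r /gmono big_nil.
  by rewrite grassmann_lift_lincomb // /lincomb big_seq1 scale1r /gmono big_nil.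
Qed.

End Lift.

Lemma alg_morph_gmono (B : algType F) (f : A -> B) s :
  alg_morph f -> f (gm s) = gmono (f \o g) s.
Proof. by move=> f_morph; rewrite /gmono alg_morph_prod. Qed.

Lemma alg_morph_eq (B : algType F) (f1 f2 : A -> B) :
  alg_morph f1 -> alg_morph f2 -> (forall n, f1 (g n) = f2 (g n)) -> f1 =1 f2.
Proof.
move=> f1_morph f2_morph f12 x.
have /andP [_ /eqP ->] := xchooseP (lincomb_spanning x).
rewrite !(linear_lincomb _ _ (alg_morph_linear _)) // /lincomb.
apply: eq_bigr => p _ /=; rewrite !alg_morph_gmono //; congr (_ *: _).
by apply: eq_bigr => i _; exact: f12.
Qed.

Section LiftTwist.
Variable m : nat.
Hypothesis m_gt0 : (0 < m)%N.

Local Notation w := (\prod_(j < m) g j).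
Local Notation lift_twist a := (grassmann_lift (twist g m a)).

Lemma lift_twist_morph a : alg_morph (lift_twist a).
Proof.
exact: grassmann_lift_morph (twist_anticomm g_anticomm m a)
                            (twist_sq0 g_anticomm g_sq0 m a).
Qed.

Lemma lift_twist_prefix a : lift_twist a w = w.
Proof.
rewrite (alg_morph_prod (lift_twist_morph a)); apply: eq_bigr => j _.
by rewrite grassmann_lift_g (twist_prefix g_anticomm g_sq0).
Qed.

Lemma lift_twist_cancel a b : a + b = 0 -> cancel (lift_twist b) (lift_twist a).
Proof.
move=> ab0; have lift_a_morph := lift_twist_morph a.
apply: (alg_morph_eq (alg_morph_comp lift_a_morph (lift_twist_morph b))
                     (@alg_morph_id _ A)).
move=> n /=; rewrite grassmann_lift_g /twist (alg_morphM lift_a_morph).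
rewrite (alg_morphD lift_a_morph) (alg_morph1 lift_a_morph) (alg_morphZ lift_a_morph).
rewrite lift_twist_prefix grassmann_lift_g /twist mulrA.
by rewrite (unipotent_mul g_anticomm g_sq0 m_gt0) [b + a]addrC ab0 scale0r addr0 mul1r.
Qed.

End LiftTwist.

Section LiftSign.
Variable k : nat.

Local Notation lift_sign := (grassmann_lift (sign_gen g k)).

Lemma lift_sign_morph : alg_morph lift_sign.
Proof.
exact: grassmann_lift_morph (sign_gen_anticomm g_anticomm k) (sign_gen_sq0 g_sq0 k).
Qed.

Lemma lift_sign_gmono s :
  lift_sign (gm s) = (-1) ^+ count (fun i => (k <= i)%N) s *: gm s.
Proof.
rewrite (alg_morph_gmono _ lift_sign_morph); elim: s => [|i s IH].
  by rewrite /gmono !big_nil scale1r.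
rewrite /gmono in IH *; rewrite !big_cons /= IH grassmann_lift_g /sign_gen.
by rewrite -scalerAl -scalerAr scalerA -exprD.
Qed.

Lemma Ek_homog_sign_eigen b z : Ephi_homog lift_sign b z -> Ek_homog g k b z.
Proof.
move=> z_eigen; have /andP [r_sorted /eqP zE] := xchooseP (lincomb_spanning z).
set r := xchoose _ in r_sorted zE.
pose P s := odd (count (fun i => (k <= i)%N) s) == b.
apply/in_mono_spanP; exists (filter (P \o snd) r).
  apply/andP; split; apply/allP => s /mapP [p]; rewrite mem_filter => /andP [Pp pr] -> //.
  exact: (allP r_sorted) _ (map_f _ pr).
apply: (scalerI two_neq0).
have -> : 2%:R *: z = z + (-1) ^+ b *: lift_sign z.
  rewrite z_eigen scaler_nat mulr2n.
  by case: (b); rewrite /= ?expr1 ?scaleN1r ?opprK ?scale1r.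
rewrite zE (linear_lincomb _ _ (alg_morph_linear lift_sign_morph)) /lincomb scaler_sumr.
rewrite -big_split big_filter scaler_sumr [RHS]big_mkcond; apply: eq_bigr => p _ /=.
rewrite lift_sign_gmono !scalerA -scalerDl mulrAC -[X in X + _]mul1r -mulrDl add1_signrM.
by rewrite /P; case: (_ == b); rewrite ?mul0rn ?mul0r ?scale0r.
Qed.

End LiftSign.

Section TwistIntertwinesSign.
Variables (k t : nat) (phi : A -> A).
Hypothesis t_odd : odd t.
Hypothesis phi_morph : alg_endo phi.
Hypothesis phi_low : forall n, (n < k)%N -> phi (g n) = g n.
Hypothesis phi_mid : forall n, (k <= n < k + t)%N -> phi (g n) = - g n.
Hypothesis phi_high : forall n, (k + t <= n)%N ->
  phi (g n) = - g n + 2%:R * ((\prod_(j < k + t) g j) * g n).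

Local Notation w := (\prod_(j < k + t) g j).
Local Notation psi := (grassmann_lift (twist g (k + t) 1)).
Local Notation lift_sign := (grassmann_lift (sign_gen g k)).

Fact kt_gt0 : (0 < k + t)%N.
Proof. by rewrite addn_gt0 (odd_gt0 t_odd) orbT. Qed.

Lemma lift_sign_prefix : lift_sign w = - w.
Proof.
rewrite prefix_gmono lift_sign_gmono iotaD count_cat add0n.
rewrite (@eq_in_count _ _ pred0) ?count_pred0; last first.
  by move=> i; rewrite mem_iota add0n /= => i_lt_k; rewrite leqNgt i_lt_k.
rewrite (@eq_in_count _ _ predT) ?count_predT ?size_iota; last first.
  by move=> i; rewrite mem_iota => /andP [->].
by rewrite -signr_odd t_odd scaleN1r.
Qed.

Lemma twist_intertwines x : lift_sign (psi x) = psi (phi x).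
Proof.
have psi_morph := lift_twist_morph (k + t) 1; have sign_morph := lift_sign_morph k.
apply: (alg_morph_eq (alg_morph_comp sign_morph psi_morph)
                     (alg_morph_comp psi_morph phi_morph)) => n /=.
rewrite grassmann_lift_g; case: (ltnP n (k + t)) => [n_lt_kt | n_ge_kt].
  have psi_g : psi (g n) = g n.
    by rewrite grassmann_lift_g (twist_prefix g_anticomm g_sq0 _ n_lt_kt).
  rewrite (twist_prefix g_anticomm g_sq0 _ n_lt_kt) grassmann_lift_g /sign_gen.
  case: (ltnP n k) => [n_lt_k | n_ge_k].
    by rewrite phi_low // psi_g expr0 scale1r.
  by rewrite phi_mid ?n_ge_k // (alg_morphN psi_morph) psi_g expr1 scaleN1r.
have n_ge_k : (k <= n)%N by apply: leq_trans n_ge_kt; apply: leq_addr.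
rewrite phi_high // mulr_natl mulr2n !(alg_morphD psi_morph) (alg_morphN psi_morph).
rewrite (alg_morphM psi_morph) lift_twist_prefix grassmann_lift_g /twist.
rewrite (alg_morphM sign_morph) (alg_morphD sign_morph) (alg_morph1 sign_morph).
rewrite (alg_morphZ sign_morph) lift_sign_prefix grassmann_lift_g /sign_gen n_ge_k.
rewrite expr1 !scale1r scaleN1r !mulrDl !mul1r !mulrDr !mulrA.
by rewrite (prefix_sq0 g_anticomm g_sq0 kt_gt0) !mul0r addr0 mulrNN opprD -addrA addKr.
Qed.

Lemma twist_graded_iso : graded_iso (Ephi_homog phi) (Ek_homog g k) psi.
Proof.
split; first exact: lift_twist_morph.
  exists (grassmann_lift (twist g (k + t) (-1))); apply: (lift_twist_cancel kt_gt0).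
    exact: addNr.
  exact: addrN.
move=> b x /(Ephi_homog_intertwine (lift_twist_morph _ _) twist_intertwines).
exact: Ek_homog_sign_eigen.
Qed.

End TwistIntertwinesSign.

End Grassmann.

Unset Implicit Arguments. Set Strict Implicit. Set Printing Implicit Defensive.

Theorem mainTheorem9 (F : fieldType) (A : algType F) (g : nat -> A)
    (k t : nat) (phi : A -> A) :
  [pchar F] =i pred0 ->
  is_grassmann g ->
  (0 < t)%N -> odd t ->
  alg_endo phi ->
  (forall n, (n < k)%N -> phi (g n) = g n) ->
  (forall n, (k <= n < k + t)%N -> phi (g n) = - g n) ->
  (forall n, (k + t <= n)%N ->
     phi (g n) = - g n + 2%:R * ((\prod_(j < k + t) g j) * g n)) ->
  exists psi : A -> A, graded_iso (Ephi_homog phi) (Ek_homog g k) psi.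
Proof.
(* [0 < t] is implied by [odd t]. *)
move=> char0 grassmann_g _ t_odd phi_morph phi_low phi_mid phi_high.
have two_neq0 : 2%:R != 0 :> F by have := char0 2; rewrite !inE /= => ->.
by eexists; apply: twist_graded_iso phi_low phi_mid phi_high.
Qed.
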